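(* Let $I$ be an ideal over an uncountable cardinal $\kappa$ such that $\mathcal{P}(\kappa)/I$ is complete, and let $\nu$ be a cardinal with $2^\nu<\kappa$. Then forcing with $\mathcal{P}(\kappa)/I\setminus\{[\emptyset]_I\}$ adds no new functions from $\nu$ to $2^\nu$.
   Context: An ideal over $\kappa$ means a proper, $\kappa$-complete ideal on $\mathcal{P}(\kappa)$ containing all singletons. The forcing notion $\mathcal{P}(\kappa)/I\setminus\{[\emptyset]_I\}$ is ordered by $[X]\leq[Y]$ iff $X\setminus Y\in I$. *)

Definition subset_of (K : Type) := K -> Prop.

Definition le_card (A B : Type) : Prop :=
  exists f : A -> B, forall x y, f x = f y -> x = y.
Definition lt_card (A B : Type) : Prop := le_card A B /\ ~ le_card B A.

(** kappa (represented by a type K of cardinality kappa) is uncountable. *)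
Definition uncountable (K : Type) : Prop := ~ le_card K nat.

Definition setminus {K : Type} (X Y : K -> Prop) : K -> Prop :=
  fun x => X x /\ ~ Y x.

Definition ideal_over (K : Type) (I : (K -> Prop) -> Prop) : Prop :=
  (forall X Y : K -> Prop, I Y -> (forall x, X x -> Y x) -> I X) /\
  (forall (J : Type) (F : J -> K -> Prop), lt_card J K ->
      (forall j, I (F j)) -> I (fun x => exists j, F j x)) /\
  ~ I (fun _ => True) /\
  (forall a : K, I (fun x => x = a)).

(** The preorder on P(kappa) inducing P(kappa)/I: [X] <= [Y] iff X \ Y in I. *)
Definition qle {K : Type} (I : (K -> Prop) -> Prop) (X Y : K -> Prop) : Prop :=
  I (setminus X Y).

Definition quotient_complete (K : Type) (I : (K -> Prop) -> Prop) : Prop :=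
  forall A : (K -> Prop) -> Prop,
    exists S : K -> Prop,
      (forall X, A X -> qle I X S) /\
      (forall T, (forall X, A X -> qle I X T) -> qle I S T).

(** Conditions of the forcing P(kappa)/I \ {[emptyset]}: representatives of
    nonzero classes, i.e. I-positive sets. *)
Definition condition {K : Type} (I : (K -> Prop) -> Prop) (X : K -> Prop) : Prop :=
  ~ I X.

Definition dense_below {K : Type} (I : (K -> Prop) -> Prop)
  (D : (K -> Prop) -> Prop) (q : K -> Prop) : Prop :=
  forall r, condition I r -> qle I r q ->
    exists r', condition I r' /\ qle I r' r /\ D r'.

(** A name for a function from N into the ground-model set V, forced to be
    such a function by p, represented by its forcing relation:
    F a b r  means  "r forces fdot(a) = b". *)
Definition function_name {K N V : Type} (I : (K -> Prop) -> Prop)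
  (p : K -> Prop) (F : N -> V -> (K -> Prop) -> Prop) : Prop :=
  (forall a b r r', condition I r' -> qle I r' r -> F a b r -> F a b r') /\
  (forall a b b' r, condition I r -> qle I r p -> F a b r -> F a b' r -> b = b') /\
  (forall a, dense_below I (fun r => exists b, F a b r) p).

(** Forcing with P(kappa)/I \ {[emptyset]} adds no new functions from N to V:
    whenever p forces fdot : N -> V, some q <= p and ground-model g : N -> V
    satisfy q forces fdot = g. *)
Definition adds_no_new_functions (K N V : Type) (I : (K -> Prop) -> Prop) : Prop :=
  forall (p : K -> Prop) (F : N -> V -> (K -> Prop) -> Prop),
    condition I p -> function_name I p F ->
    exists (q : K -> Prop) (g : N -> V),
      condition I q /\ qle I q p /\
      forall a, dense_below I (F a (g a)) q.

From mathcomp Require Import all_boot boolp classical_sets cardinality.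
From Stdlib Require Cantor.

(* Let S a b be the supremum in P(kappa)/I of the conditions below p that force
   fdot(a) = b.  For h : N -> 2^N put C_h := p /\ forall a, S a (h a).  Modulo I,
   p is covered by the sets C_h together with, for each a, the null set of points
   lying in no S a b; these are fewer than kappa sets, because 2^(nu * nu) = 2^nu,
   so kappa-completeness yields an I-positive C_h, and C_h forces fdot = h.
   The identity nu * nu = nu for infinite nu is Hessenberg's theorem, proved with
   Zorn's lemma on partial injections of B * B into B. *)

Lemma le_card_trans {A B C : Type} : le_card A B -> le_card B C -> le_card A C.
Proof. by move=> [f injf] [g injg]; exists (g \o f) => x y /injg /injf. Qed.

Lemma le_lt_card_trans {A B C : Type} : le_card A B -> lt_card B C -> lt_card A C.
Proof.
move=> leAB [leBC not_leCB]; split; first exact: le_card_trans leAB leBC.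
by move=> leCA; apply: not_leCB; exact: le_card_trans leCA leAB.
Qed.

Lemma le_card_fun_bool (N : Type) : le_card N (N -> bool).
Proof.
exists (fun a c => `[< c = a >]) => a a' /(congr1 (fun g => g a')).
by rewrite (asboolT (erefl a')) => /asboolP.
Qed.

Lemma uncountable_lt_card_bool {K : Type} : uncountable K -> lt_card bool K.
Proof.
move=> uncK.
have [x [y neq_xy]] : exists x y : K, x <> y.
  apply: contra_notP uncK => no_pair; exists (fun=> 0) => x y _.
  by apply: contra_notP no_pair => neq_xy; exists x, y.
split.
  exists (fun b : bool => if b then x else y).
  by move=> [] [] // eq_xy; case: neq_xy; rewrite eq_xy.
move=> leKbool; apply: uncK; apply: le_card_trans leKbool _.
by exists nat_of_bool => [] [] [].
Qed.

Section IdealOver.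
Context {K : Type} {I : (K -> Prop) -> Prop}.
Hypotheses (idealI : ideal_over K I) (bool_lt_K : lt_card bool K).

Lemma ideal_sub {X Y : K -> Prop} : I Y -> (forall x, X x -> Y x) -> I X.
Proof. by case: idealI => sub _; exact: sub. Qed.

Lemma ideal_cover {X Y Z : K -> Prop} :
  I X -> I Y -> (forall x, Z x -> X x \/ Y x) -> I Z.
Proof.
case: idealI => _ [complete _] IX IY ZXY.
have IXY := complete bool (fun b => if b then X else Y) bool_lt_K.
apply: ideal_sub (IXY _) _ => [[]//|x /ZXY[]]; by [exists true|exists false].
Qed.

Lemma ideal0 : I (fun _ => False).
Proof.
have [[k _] _] := bool_lt_K; case: idealI => _ [_ [_ singleton]].
exact: ideal_sub (singleton (k true)) _.
Qed.

Lemma qle_trans {X Y Z : K -> Prop} : qle I X Y -> qle I Y Z -> qle I X Z.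
Proof.
move=> IXY IYZ; apply: ideal_cover IXY IYZ _ => x [Xx nZx].
by have [Yx|nYx] := pselect (Y x); [right|left].
Qed.

Lemma sub_qle {X Y : K -> Prop} : (forall x, X x -> Y x) -> qle I X Y.
Proof. by move=> XY; apply: ideal_sub ideal0 _ => x [/XY]. Qed.

Lemma condition_qle_meet {r S : K -> Prop} :
  condition I r -> qle I r S -> ~ I (fun x => S x /\ r x).
Proof.
move=> pos_r rS ISr; apply: pos_r; apply: ideal_cover rS ISr _ => x rx.
by have [Sx|nSx] := pselect (S x); [right|left].
Qed.

Definition is_qsup (A : (K -> Prop) -> Prop) (S : K -> Prop) : Prop :=
  (forall X, A X -> qle I X S) /\
  (forall T, (forall X, A X -> qle I X T) -> qle I S T).

(* If every member of [A] is almost disjoint from [r], then [S \ r] is an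
   upper bound of [A], so [S] is almost disjoint from [r]. *)
Lemma qsup_meet {A : (K -> Prop) -> Prop} {S r : K -> Prop} :
  is_qsup A S -> ~ I (fun x => S x /\ r x) ->
  exists2 X, A X & ~ I (fun x => X x /\ r x).
Proof.
move=> [ubS leastS] pos_Sr; apply: contra_notP pos_Sr => disjoint.
have /leastS ISr : forall X, A X -> qle I X (fun x => S x /\ ~ r x).
  move=> X AX; have IXr : I (fun x => X x /\ r x).
    by apply: contra_notP disjoint => pos_Xr; exists X.
  apply: ideal_cover (ubS X AX) IXr _ => x [Xx nSr].
  by have [rx|nrx] := pselect (r x); [right|left; split => // Sx; exact: nSr].
by apply: ideal_sub ISr _ => x [Sx rx]; split => // -[_]; apply.
Qed.

Hypothesis completeI : quotient_complete K I.

Definition qsup (A : (K -> Prop) -> Prop) : K -> Prop := proj1_sig (cid (completeI A)).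

Lemma qsupP (A : (K -> Prop) -> Prop) : is_qsup A (qsup A).
Proof. exact: proj2_sig (cid (completeI A)). Qed.

Section NameDecision.
Context {N V : Type} {p : K -> Prop} {F : N -> V -> (K -> Prop) -> Prop}.
Hypotheses (pos_p : condition I p) (nameF : function_name I p F).

Definition forces_below (a : N) (b : V) (r : K -> Prop) : Prop :=
  condition I r /\ qle I r p /\ F a b r.

Let S a b := qsup (forces_below a b).

Definition decided_by (h : N -> V) (x : K) : Prop := p x /\ forall a, S a (h a) x.

Lemma undecided_null (a : N) : I (fun x => p x /\ forall b, ~ S a b x).
Proof.
case: nameF => _ [_ denseF]; set D := fun x => _.
apply: contrapT => pos_D.
have Dp : qle I D p by apply: sub_qle => x [].
have [r [pos_r [rD [b Fr]]]] := denseF a D pos_D Dp.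
have rp : qle I r p := qle_trans rD Dp.
have rS : qle I r (S a b) by apply: (proj1 (qsupP _)).
apply: pos_r; apply: ideal_cover rD rS _ => x rx.
by have [[_ nS]|nDx] := pselect (D x); [right; split => // /nS|left].
Qed.

Lemma decided_positive :
  lt_card N K -> lt_card (N -> V) K -> exists h, ~ I (decided_by h).
Proof.
case: idealI => _ [complete _] N_lt_K NV_lt_K; apply: contra_notP pos_p => all_null.
have Idecided : I (fun x => exists h, decided_by h x).
  by apply: complete NV_lt_K _ => h; apply: contra_notP all_null; exists h.
have Iundecided := complete _ _ N_lt_K undecided_null.
apply: ideal_cover Idecided Iundecided _ => x px.
have [all_decided|] := pselect (forall a, exists b, S a b x).
  by left; have [h hx] := choice all_decided; exists h.
move=> /existsNP[a undecided]; right; exists a; split => // b Sabx.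
by apply: undecided; exists b.
Qed.

Lemma decided_qle (h : N -> V) : qle I (decided_by h) p.
Proof. by apply: sub_qle => x []. Qed.

(* Below [decided_by h], any condition forcing a value of [F a] meets some
   condition forcing [F a = h a], and uniqueness of values identifies them. *)
Lemma decided_forces (h : N -> V) (a : N) : dense_below I (F a (h a)) (decided_by h).
Proof.
case: nameF => downF [uniqF denseF] r pos_r r_dec.
have [r1 [pos_r1 [r1r [b Fr1]]]] := denseF a r pos_r (qle_trans r_dec (decided_qle h)).
have r1S : qle I r1 (S a (h a)).
  by apply: qle_trans (qle_trans r1r r_dec) (sub_qle _) => x [_]; apply.
have [X [_ [Xp FX]] pos_Xr1] := qsup_meet (qsupP _) (condition_qle_meet pos_r1 r1S).
have Y_X : qle I (fun x => X x /\ r1 x) X by apply: sub_qle => x [].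
have Y_r1 : qle I (fun x => X x /\ r1 x) r1 by apply: sub_qle => x [].
have -> : h a = b.
  apply: uniqF (downF _ _ _ _ pos_Xr1 Y_X FX) (downF _ _ _ _ pos_Xr1 Y_r1 Fr1) => //.
  exact: qle_trans Y_X Xp.
by exists r1.
Qed.

End NameDecision.

Theorem adds_no_new_functions_of_small_exponent (N V : Type) :
  lt_card N K -> lt_card (N -> V) K -> adds_no_new_functions K N V I.
Proof.
move=> N_lt_K NV_lt_K p F pos_p nameF.
have [h pos_h] := decided_positive pos_p nameF N_lt_K NV_lt_K.
exists (decided_by (p := p) (F := F) h), h; split => //; split.
  exact: decided_qle.
by move=> a; exact: decided_forces nameF h a.
Qed.

End IdealOver.

Local Open Scope classical_set_scope.

Definition embeds {A B : Type} (X : set A) (Y : set B) : Prop :=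
  exists R : A -> B -> Prop,
    [/\ forall x, X x -> exists2 y, R x y & Y y,
        forall x y y', X x -> R x y -> R x y' -> y = y' &
        forall x x' y, X x -> X x' -> R x y -> R x' y -> x = x'].

Lemma embeds_trans {A B C : Type} {X : set A} {Y : set B} {Z : set C} :
  embeds X Y -> embeds Y Z -> embeds X Z.
Proof.
move=> [R [Rtot Rfun Rinj]] [S [Stot Sfun Sinj]].
exists (fun x z => exists2 y, Y y & R x y /\ S y z); split.
- move=> x Xx; have [y Rxy Yy] := Rtot x Xx; have [z Syz Zz] := Stot y Yy.
  by exists z => //; exists y.
- move=> x z z' Xx [y Yy [Rxy Syz]] [y' _ [Rxy' Sy'z']].
  by move: Sy'z'; rewrite -(Rfun x y y' Xx Rxy Rxy'); apply: Sfun.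
- move=> x x' z Xx Xx' [y Yy [Rxy Syz]] [y' Yy' [Rx'y' Sy'z]].
  by move: Rx'y'; rewrite -(Sinj y y' z Yy Yy' Syz Sy'z); apply: Rinj.
Qed.

Lemma subset_embeds {A : Type} {X Y : set A} : X `<=` Y -> embeds X Y.
Proof.
move=> XY; exists eq; split => [x Xx|x y y' _ <-|x x' y _ _ -> ->] //.
by exists x => //; apply: XY.
Qed.

Lemma embeds_refl {A : Type} (X : set A) : embeds X X.
Proof. exact: subset_embeds. Qed.

Lemma embedsX {A B A' B' : Type} {X : set A} {Y : set B} {X' : set A'} {Y' : set B'} :
  embeds X Y -> embeds X' Y' -> embeds (X `*` X') (Y `*` Y').
Proof.
move=> [R [Rtot Rfun Rinj]] [S [Stot Sfun Sinj]].
exists (fun u v => R u.1 v.1 /\ S u.2 v.2); split.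
- move=> [x x'] [/= Xx Xx'].
  have [y Rxy Yy] := Rtot x Xx; have [y' Sxy' Yy'] := Stot x' Xx'.
  by exists (y, y').
- move=> [x x'] [y y'] [z z'] [/= Xx Xx'] [/= Rxy Sxy'] [/= Rxz Sxz'].
  by rewrite (Rfun x y z Xx Rxy Rxz) (Sfun x' y' z' Xx' Sxy' Sxz').
- move=> [x x'] [z z'] [y y'] [/= Xx Xx'] [/= Zz Zz'] [/= Rxy Sxy'] [/= Rzy Szy'].
  by rewrite (Rinj x z y Xx Zz Rxy Rzy) (Sinj x' z' y' Xx' Zz' Sxy' Szy').
Qed.

(* Points of [X] are tagged by [z0], the remaining points of [Y] by [z1]. *)
Lemma embeds_setU {A B : Type} {X Y : set A} {Z : set B} {z0 z1 : B} :
  Z z0 -> Z z1 -> z0 <> z1 -> embeds X Z -> embeds Y Z -> embeds (X `|` Y) (Z `*` Z).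
Proof.
move=> Zz0 Zz1 z01 [R [Rtot Rfun Rinj]] [S [Stot Sfun Sinj]].
have Y_of_nX x : (X `|` Y) x -> ~ X x -> Y x by case.
exists (fun x w => (X x /\ R x w.1 /\ w.2 = z0) \/ (~ X x /\ S x w.1 /\ w.2 = z1)); split.
- move=> x XYx; have [Xx|nXx] := pselect (X x).
    by have [z Rxz Zz] := Rtot x Xx; exists (z, z0); [left|].
  by have [z Sxz Zz] := Stot x (Y_of_nX x XYx nXx); exists (z, z1); [right|].
- move=> x [y t] [y' t'] XYx /=.
  move=> [[Xx [Rxy ->]]|[nXx [Sxy ->]]] [[Xx' [Rxy' ->]]|[nXx' [Sxy' ->]]].
  + by rewrite (Rfun x y y' Xx Rxy Rxy').
  + by case: nXx'.
  + by case: nXx.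
  + by rewrite (Sfun x y y' (Y_of_nX x XYx nXx) Sxy Sxy').
- move=> x x' [y t] XYx XYx' /=.
  move=> [[Xx [Rxy ->]]|[nXx [Sxy ->]]] [[Xx' [Rx'y E]]|[nXx' [Sx'y E]]].
  + exact: Rinj x x' y Xx Xx' Rxy Rx'y.
  + by case: z01.
  + by case: z01.
  + exact: Sinj x x' y (Y_of_nX x XYx nXx) (Y_of_nX x' XYx' nXx') Sxy Sx'y.
Qed.

Lemma chain_common {T : Type} {C : set (set T)} {M M' : set T} {t t' : T} :
  total_on C subset -> C M -> C M' -> M t -> M' t' -> exists2 M'', C M'' & M'' t /\ M'' t'.
Proof.
move=> Ctot CM CM' Mt M't'.
have [MM'|M'M] := Ctot M M' CM CM'.
  by exists M' => //; split => //; apply: MM'.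
by exists M => //; split => //; apply: M'M.
Qed.

Definition partial_bijection {A B : Type} (X : set A) (Y : set B) (M : set (A * B)) :=
  [/\ M `<=` X `*` Y,
       forall a b b', M (a, b) -> M (a, b') -> b = b' &
       forall a a' b, M (a, b) -> M (a', b) -> a = a'].

Lemma embeds_total {A B : Type} (X : set A) (Y : set B) : embeds X Y \/ embeds Y X.
Proof.
have [M [[MXY Mfun Minj] Mmax]] : exists M, partial_bijection X Y M /\
    forall M', M `<` M' -> ~ partial_bijection X Y M'.
  apply: Zorn_bigcup => C Cbij Ctot; split.
  - by move=> t [M CM Mt]; have [MXY _ _] := Cbij M CM; exact: MXY.
  - move=> a b b' [M CM Mab] [M' CM' M'ab'].
    have [M'' CM'' [M''ab M''ab']] := chain_common Ctot CM CM' Mab M'ab'.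
    by have [_ M''fun _] := Cbij M'' CM''; exact: M''fun M''ab M''ab'.
  - move=> a a' b [M CM Mab] [M' CM' M'a'b].
    have [M'' CM'' [M''ab M''a'b]] := chain_common Ctot CM CM' Mab M'a'b.
    by have [_ _ M''inj] := Cbij M'' CM''; exact: M''inj M''ab M''a'b.
have [Mtot|] := pselect (forall a, X a -> exists b, M (a, b)).
  left; exists (fun a b => M (a, b)); split => [x /Mtot[y Mxy]||].
  + by exists y => //; have [] := MXY _ Mxy.
  + by move=> x y y' _; apply: Mfun.
  + by move=> x x' y _ _; apply: Minj.
have [Msurj|] := pselect (forall b, Y b -> exists a, M (a, b)).
  right; exists (fun b a => M (a, b)); split => [y /Msurj[x Mxy]||].
  + by exists x => //; have [] := MXY _ Mxy.
  + by move=> y x x' _; apply: Minj.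
  + by move=> y y' x _ _; apply: Mfun.
move=> /existsNP[b0 /not_implyP[Yb0 free_b0]] /existsNP[a0 /not_implyP[Xa0 free_a0]].
case: (Mmax (M `|` [set (a0, b0)])).
  split; first exact: subsetUl.
  by move=> /(_ (a0, b0) (or_intror erefl)) Mab0; apply: free_a0; exists b0.
split.
- by move=> t [/MXY //|->].
- move=> a b b' [Mab|[Ea Eb]] [Mab'|[Ea' Eb']]; subst.
  + exact: Mfun Mab Mab'.
  + by case: free_a0; exists b.
  + by case: free_a0; exists b'.
  + by [].
- move=> a a' b [Mab|[Ea Eb]] [Ma'b|[Ea' Eb']]; subst.
  + exact: Minj Mab Ma'b.
  + by case: free_b0; exists a.
  + by case: free_b0; exists a'.
  + by [].
Qed.

Lemma le_card_of_embeds (A B : Type) : embeds [set: A] [set: B] -> le_card A B.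
Proof.
move=> [R [Rtot _ Rinj]].
have /choice[f Rf] : forall a, exists b, R a b by move=> a; have [b] := Rtot a I; exists b.
by exists f => x y fxy; apply: (Rinj x y (f x) I I (Rf x)); rewrite fxy.
Qed.

Section Pairing.
Context {N : Type}.
Implicit Types (M : set ((N * N) * N)) (B D : set N).

Definition pairing_base M : set N := fun a => exists v, M ((a, a), v).

(* [M] is the graph of an injection from [B `*` B] into [B], where [B] is
   read off the diagonal of the domain of [M]. *)
Definition pairing M : Prop :=
  let B := pairing_base M in
  [/\ forall u, (B `*` B) u -> exists v, M (u, v),
      forall u v, M (u, v) -> (B `*` B) u /\ B v,
      forall u v v', M (u, v) -> M (u, v') -> v = v' &
      forall u u' v, M (u, v) -> M (u', v) -> u = u'].

Lemma pairing_base_sub {M M'} : M `<=` M' -> pairing_base M `<=` pairing_base M'.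
Proof. by move=> MM' a [v Mv]; exists v; apply: MM'. Qed.

Lemma pairing_embeds {M} :
  pairing M -> embeds (pairing_base M `*` pairing_base M) (pairing_base M).
Proof.
move=> [Mtot Mval Mfun Minj]; exists (fun u v => M (u, v)); split.
- by move=> u /Mtot[v Muv]; exists v => //; have [] := Mval u v Muv.
- by move=> u v v' _; apply: Mfun.
- by move=> u u' v _ _; apply: Minj.
Qed.

Lemma pairing_bigcup (C : set (set ((N * N) * N))) :
  C `<=` pairing -> total_on C subset -> pairing (\bigcup_(M in C) M).
Proof.
move=> Cpair Ctot; set U := \bigcup_(M in C) M.
have sub_U M : C M -> M `<=` U by move=> CM t Mt; exists M.
split.
- move=> [a c] [/= [va [Ma CMa Mava]] [vc [Mc CMc Mcvc]]].
  have [M CM [Mava' Mcvc']] := chain_common Ctot CMa CMc Mava Mcvc.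
  have [Mtot _ _ _] := Cpair M CM.
  have [v Mv] : exists v, M ((a, c), v) by apply: Mtot; split; [exists va|exists vc].
  by exists v; apply: sub_U Mv.
- move=> u v [M CM Muv]; have [_ Mval _ _] := Cpair M CM.
  have [[Bu1 Bu2] Bv] := Mval u v Muv; have MU := pairing_base_sub (sub_U M CM).
  by split; [split|]; apply: MU.
- move=> u v v' [M CM Muv] [M' CM' M'uv'].
  have [M'' CM'' [Muv'' Muv''']] := chain_common Ctot CM CM' Muv M'uv'.
  by have [_ _ Mfun _] := Cpair M'' CM''; apply: Mfun Muv'' Muv'''.
- move=> u u' v [M CM Muv] [M' CM' M'u'v].
  have [M'' CM'' [Muv'' Mu'v'']] := chain_common Ctot CM CM' Muv M'u'v.
  by have [_ _ _ Minj] := Cpair M'' CM''; apply: Minj Muv'' Mu'v''.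
Qed.

Definition fresh_pairs B D : set (N * N) := (B `|` D) `*` (B `|` D) `\` B `*` B.

(* A pairing on [B] extends to [B `|` D] by sending the fresh pairs into [D]. *)
Lemma pairing_setU {M D} :
  pairing M -> D `<=` ~` pairing_base M -> D !=set0 ->
  embeds (fresh_pairs (pairing_base M) D) D ->
  exists M', pairing M' /\ M `<` M'.
Proof.
set B := pairing_base M => -[Mtot Mval Mfun Minj] DnB [d Dd] [G [Gtot Gfun Ginj]].
set New := fresh_pairs B D.
pose M' := M `|` [set t | New t.1 /\ G t.1 t.2].
have New_diag a : D a -> New (a, a).
  by move=> Da; split; [split; right|move=> [/DnB]].
have G_val u v : New u -> G u v -> D v.
  by move=> Nu Guv; have [y Guy Dy] := Gtot u Nu; rewrite (Gfun u v y Nu Guv Guy).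
have M_new u v : M (u, v) -> ~ New u by move=> /Mval[Bu _] [_]; apply.
have baseM' : pairing_base M' = B `|` D.
  apply/seteqP; split => a.
    by move=> [v [Mav|[[[Ba _] _] _]]]; [left; exists v|].
  move=> [[v Mav]|Da]; first by exists v; left.
  have [v Gav _] := Gtot _ (New_diag a Da).
  by exists v; right; split => //; apply: New_diag.
exists M'; split; last first.
  split; first exact: subsetUl.
  have [v Gdv _] := Gtot _ (New_diag d Dd).
  move=> /(_ ((d, d), v) (or_intror (conj (New_diag d Dd) Gdv))) /Mval[[Bd _] _].
  exact: DnB Dd Bd.
rewrite /pairing baseM'; split.
- move=> u BDu; have [BBu|nBBu] := pselect ((B `*` B) u).
    by have [v Muv] := Mtot u BBu; exists v; left.
  have Nu : New u by split.
  by have [v Guv _] := Gtot u Nu; exists v; right; split.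
- move=> u v [/Mval[[Bu1 Bu2] Bv]|[Nu Guv]].
    by split; [split|]; left.
  by split; [exact: Nu.1|right; exact: G_val Nu Guv].
- move=> u v v' [Muv|[Nu Guv]] [Muv'|[Nu' Guv']].
  + exact: Mfun Muv Muv'.
  + by case: (M_new u v Muv).
  + by case: (M_new u v' Muv').
  + exact: Gfun Nu Guv Guv'.
- move=> u u' v [Muv|[Nu Guv]] [Mu'v|[Nu' Gu'v]].
  + exact: Minj Muv Mu'v.
  + by have [_ Bv] := Mval u v Muv; case: (DnB v (G_val u' v Nu' Gu'v)).
  + by have [_ Bv] := Mval u' v Mu'v; case: (DnB v (G_val u v Nu Guv)).
  + exact: Ginj Nu Nu' Guv Gu'v.
Qed.
End Pairing.

(* A copy [D] of [B] inside its complement is exactly what is needed to enlarge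
   the pairing: [(B `|` D) `*` (B `|` D)] has the cardinality of [B], hence of [D]. *)
Lemma pairing_extend {N : Type} {M : set ((N * N) * N)} {b0 b1 : N} :
  pairing M -> pairing_base M b0 -> pairing_base M b1 -> b0 <> b1 ->
  embeds (pairing_base M) (~` pairing_base M) -> exists M', pairing M' /\ M `<` M'.
Proof.
set B := pairing_base M => pairM Bb0 Bb1 b01 [E [Etot Efun Einj]].
pose D y := exists2 x, B x & E x y.
have DnB : D `<=` ~` B.
  move=> y [x Bx Exy]; have [y' Exy' nBy'] := Etot x Bx.
  by rewrite (Efun x y y' Bx Exy Exy').
have BD : embeds B D.
  exists E; split; [|exact: Efun|exact: Einj].
  by move=> x Bx; have [y Exy _] := Etot x Bx; exists y => //; exists x.
have DB : embeds D B.
  exists (fun y x => B x /\ E x y); split.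
  - by move=> y [x Bx Exy]; exists x.
  - by move=> y x x' _ [Bx Exy] [Bx' Ex'y]; apply: Einj Exy Ex'y.
  - by move=> y y' x _ _ [Bx Exy] [_ Exy']; apply: Efun Exy Exy'.
have BB_B := pairing_embeds pairM.
have UB : embeds (B `|` D) (B `*` B) := embeds_setU Bb0 Bb1 b01 (embeds_refl B) DB.
have UU_D : embeds ((B `|` D) `*` (B `|` D)) D :=
  embeds_trans (embedsX UB UB) (embeds_trans (embedsX BB_B BB_B) (embeds_trans BB_B BD)).
apply: pairing_setU pairM DnB _ (embeds_trans (subset_embeds (@subDsetl _ _ _)) UU_D).
by have [d Eb0d _] := Etot b0 Bb0; exists d, b0.
Qed.

Definition nat_pairing {N : Type} (iota : nat -> N) : set ((N * N) * N) :=
  fun t => exists i j, t = ((iota i, iota j), iota (Cantor.to_nat (i, j))).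

Lemma nat_pairingP {N : Type} {iota : nat -> N} : injective iota ->
  pairing (nat_pairing iota) /\ forall n, pairing_base (nat_pairing iota) (iota n).
Proof.
move=> iota_inj.
have base_iota n : pairing_base (nat_pairing iota) (iota n).
  by exists (iota (Cantor.to_nat (n, n))), n, n.
have iota_base a : pairing_base (nat_pairing iota) a -> exists i, a = iota i.
  by move=> [v [i [j [-> _ _]]]]; exists i.
split => //; split.
- move=> [a c] /= [/iota_base[i ->] /iota_base[j ->]].
  by exists (iota (Cantor.to_nat (i, j))), i, j.
- by move=> u v [i [j [-> ->]]]; split; [split|]; apply: base_iota.
- by move=> u v v' [i [j [-> ->]]] [i' [j' [/iota_inj <- /iota_inj <- ->]]].
- move=> u u' v [i [j [-> ->]]] [i' [j' [-> E]]].
  by case: (Cantor.to_nat_inj (i, j) (i', j') (iota_inj _ _ E)) => <- <-.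
Qed.

(* Hessenberg: take a maximal pairing [M] extending the one on [iota]; its base
   [B] cannot embed into its complement, so the complement embeds into [B] and
   [N = B `|` ~` B] is no larger than [B `*` B], that is than [B]. *)
Theorem le_card_prod_self {N : Type} : le_card nat N -> le_card (N * N) N.
Proof.
move=> [iota iota_inj]; have [pair0 base0] := nat_pairingP iota_inj.
pose P M := pairing M /\ (M = set0 \/ nat_pairing iota `<=` M).
have [M [[pairM M0] maxM]] : exists M, P M /\ forall M', M `<` M' -> ~ P M'.
  apply: Zorn_bigcup => C CP Ctot; split.
    by apply: pairing_bigcup Ctot => M /CP[].
  have [[M CM [t Mt]]|C_empty] := pselect (exists2 M, C M & M !=set0).
    have [_ [M0|R0M]] := CP M CM; first by move: Mt; rewrite M0.
    by right => t' R0t'; exists M => //; apply: R0M.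
  left; apply/seteqP; split => // t [M CM Mt].
  by apply: C_empty; exists M => //; exists t.
have R0M : nat_pairing iota `<=` M.
  case: M0 => // M0; case: (maxM (nat_pairing iota)); last by split => //; right.
  rewrite M0; split; first exact: sub0set.
  by move=> /(_ ((iota 0, iota 0), iota (Cantor.to_nat (0, 0)))) []; exists 0, 0.
set B := pairing_base M.
have Biota n : B (iota n) := pairing_base_sub R0M _ (base0 n).
have iota01 : iota 0 <> iota 1 by move/iota_inj.
have [BC|CB] := embeds_total B (~` B).
  have [M' [pairM' MM']] := pairing_extend pairM (Biota 0) (Biota 1) iota01 BC.
  by case: (maxM M' MM'); split => //; right; apply: subset_trans R0M (properW MM').
have TB : embeds [set: N] B.
  apply: embeds_trans (subset_embeds (_ : [set: N] `<=` B `|` ~` B)) _; first by rewrite setUv.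
  have UB := embeds_setU (Biota 0) (Biota 1) iota01 (embeds_refl B) CB.
  exact: embeds_trans UB (pairing_embeds pairM).
apply: le_card_of_embeds.
apply: embeds_trans (subset_embeds (_ : [set: N * N] `<=` [set: N] `*` [set: N])) _ => //.
apply: embeds_trans (embedsX TB TB) _.
exact: embeds_trans (pairing_embeds pairM) (subset_embeds (@subsetT _ B)).
Qed.

Lemma le_card_curry {A B C : Type} : le_card (A * B) C -> le_card (A -> B -> bool) (C -> bool).
Proof.
move=> [f injf].
exists (fun phi c => `[< exists a b, f (a, b) = c /\ phi a b >]) => phi psi eq_code.
have code_at (chi : A -> B -> bool) a b :
    `[< exists a' b', f (a', b') = f (a, b) /\ chi a' b' >] = chi a b.
  apply/asboolP/idP => [[a' [b' [/injf [-> ->]]]]//|chi_ab].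
  by exists a, b.
apply/funext => a; apply/funext => b.
by rewrite -code_at -[psi a b]code_at (congr1 (fun g => g (f (a, b))) eq_code).
Qed.

Lemma le_card_setT (A : Type) (B : pointedType) : ([set: A] #<= [set: B])%card -> le_card A B.
Proof.
move/pcard_injP => [f finj]; exists f => x y fxy.
by apply: finj => //; rewrite in_setT.
Qed.

Lemma uncountable_le_card_nat {K : Type} : uncountable K -> le_card nat K.
Proof.
elim/Ppointed: K => K uncK.
  by case: uncK; exists (fun=> 0) => x; case: (no x).
apply: le_card_setT; apply/infiniteP => /finite_set_countable countK.
by apply: uncK; apply: le_card_setT.
Qed.

(* A finite [N] injects into some ['I_n], so [N -> N -> bool] injects into the
   finite type [{ffun 'I_n * 'I_n -> bool}]. *)
Lemma finite_le_card_fun2_bool_nat {N : Type} :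
  ~ le_card nat N -> le_card (N -> N -> bool) nat.
Proof.
elim/Ppointed: N => N finN.
  by exists (fun=> 0) => f g _; apply/funext => a; case: (no a).
have /finite_setP [n eqNn] : finite_set [set: N].
  by apply/finite_setPn => leNatN; apply: finN; apply: le_card_setT.
move: eqNn; rewrite card_eq_le => /andP [/pcard_leP leNn _].
have [e e_lt_n einj] := injfunPex.1 leNn.
have e_ord x : e x < n by have := e_lt_n x I.
have inj_e x y : e x = e y -> x = y by apply: einj; rewrite in_setT.
pose code (phi : N -> N -> bool) : {ffun 'I_n * 'I_n -> bool} :=
  [ffun ij => `[< exists a c, e a = val ij.1 /\ e c = val ij.2 /\ phi a c >]].
exists (fun phi => pickle (code phi)) => phi psi /(pcan_inj pickleK) eq_code.
apply/funext => a; apply/funext => c.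
have := congr1 (fun g : {ffun 'I_n * 'I_n -> bool} => g (Ordinal (e_ord a), Ordinal (e_ord c)))
  eq_code.
rewrite /= !ffunE /=.
have code_at (chi : N -> N -> bool) :
    `[< exists a' c', e a' = e a /\ e c' = e c /\ chi a' c' >] = chi a c.
  apply/idP/idP; first by move/asboolP => [a' [c' [/inj_e -> [/inj_e -> ->]]]].
  by move=> chi_ac; apply/asboolP; exists a, c.
by rewrite !code_at.
Qed.

Lemma lt_card_fun2_bool (K N : Type) :
  uncountable K -> lt_card (N -> bool) K -> lt_card (N -> N -> bool) K.
Proof.
move=> uncK N2_lt_K; have [nat_le_N|finN] := pselect (le_card nat N).
  exact: le_lt_card_trans (le_card_curry (le_card_prod_self nat_le_N)) N2_lt_K.
have nat_lt_K : lt_card nat K by split; [exact: uncountable_le_card_nat|exact: uncK].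
exact: le_lt_card_trans (finite_le_card_fun2_bool_nat finN) nat_lt_K.
Qed.

Theorem proposition1p4 (K : Type) (I : (K -> Prop) -> Prop) (N : Type) :
  uncountable K ->
  ideal_over K I ->
  quotient_complete K I ->
  lt_card (N -> bool) K ->
  adds_no_new_functions K N (N -> bool) I.
Proof.
move=> uncK idealI completeI N2_lt_K.
have bool_lt_K := uncountable_lt_card_bool uncK.
apply: (adds_no_new_functions_of_small_exponent idealI bool_lt_K completeI).
  exact: le_lt_card_trans (le_card_fun_bool N) N2_lt_K.
exact: lt_card_fun2_bool.
Qed.
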